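(* There exists a compact set $K\subset\mathbb{R}^2$ with positive two-dimensional Lebesgue measure such that $K+S^1$ has empty interior.
   Context: $S^1$ is the Euclidean unit circle in $\mathbb{R}^2$; $X+Y=\{x+y:x\in X,y\in Y\}$. *)

From HB Require Import structures.
From mathcomp Require Import all_boot all_order all_algebra.
From mathcomp Require Import all_classical all_reals all_analysis.
Set Implicit Arguments. Unset Strict Implicit. Unset Printing Implicit Defensive.
Import Order.TTheory GRing.Theory Num.Theory.
Import numFieldNormedType.Exports.
Local Open Scope classical_set_scope.
Local Open Scope ring_scope.

Definition circle {R : realType} : set (R * R) :=
  [set p | p.1 ^+ 2 + p.2 ^+ 2 = 1].

Definition minkowski_sum (R : realType) (X Y : set (R * R)) : set (R * R) :=
  [set z | exists x y, X x /\ Y y /\ z = (x.1 + y.1, x.2 + y.2)].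

Definition lebesgue2 (R : realType) (A : set (R * R)) : \bar R :=
  ((@lebesgue_measure R) \x (@lebesgue_measure R))%E A.

Definition measurable_R2 (R : realType) (A : set (R * R)) : Prop :=
  measurable (A : set (g_sigma_algebraType (R.-ocitv.-measurable) * g_sigma_algebraType (R.-ocitv.-measurable))).

From HB Require Import structures.
From mathcomp Require Import all_boot all_order all_algebra.
From mathcomp Require Import all_classical all_reals all_analysis.
From mathcomp Require Import ring lra.
Import Order.TTheory GRing.Theory Num.Theory.
Import numFieldNormedType.Exports.
Local Open Scope classical_set_scope.
Local Open Scope ring_scope.

(* Enumerate the rational points c_0, c_1, ... of the plane. The unit circle
   centred at c_n is a null set, so it lies in an open annulus meeting the
   unit square in area less than 2^-(n+2). Removing all these annuli from the
   unit square leaves a compact set K of area at least 1/2 that misses every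
   unit circle centred at a rational point. Since z lies in K + S^1 exactly
   when K meets the unit circle centred at z, the set K + S^1 contains no
   rational point, so its interior is empty. *)
Section circles.
Context {R : realType}.
Implicit Types (c p : R * R) (d : R).

Definition sqdist c p : R := (p.1 - c.1) ^+ 2 + (p.2 - c.2) ^+ 2.

Definition unit_circle_at c : set (R * R) := sqdist c @^-1` [set 1].

Definition annulus c d : set (R * R) := sqdist c @^-1` `](1 - d), (1 + d)[%classic.

Lemma measurable_sqdist c :
  measurable_fun [set: measurableTypeR R * measurableTypeR R] (sqdist c).
Proof.
by apply: measurable_realfun.measurable_funD; apply: measurable_realfun.measurable_funX;
  apply: measurable_realfun.measurable_funB;
  first [exact: measurable_fst | exact: measurable_snd | exact: measurable_cst].
Qed.

Lemma measurable_R2_sqdist_preimage c (B : set R) :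
  measurable B -> measurable_R2 (sqdist c @^-1` B).
Proof. by move=> mB; rewrite -[_ @^-1` _]setTI; exact: measurable_sqdist. Qed.

Lemma continuous_sqdist c : continuous (sqdist c).
Proof.
move=> p; apply: cvgD; apply: cvgM; apply: cvgB; try exact: cvg_cst.
all: first [exact: cvg_fst | exact: cvg_snd].
Qed.

Lemma measurable_R2_unit_circle_at c : measurable_R2 (unit_circle_at c).
Proof. exact: measurable_R2_sqdist_preimage (measurable_set1 _). Qed.

Lemma measurable_R2_annulus c d : measurable_R2 (annulus c d).
Proof. exact: measurable_R2_sqdist_preimage (measurable_itv _). Qed.

Lemma open_annulus c d : open (annulus c d).
Proof. by apply: open_comp => [p _|]; [exact: continuous_sqdist | exact: itv_open]. Qed.

Lemma unit_circle_at_sub_annulus c d : 0 < d -> unit_circle_at c `<=` annulus c d.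
Proof.
move=> d_gt0 p; rewrite /unit_circle_at /annulus /= in_itv /= => ->.
by apply/andP; split; lra.
Qed.

Lemma annulusS c d d' : d <= d' -> annulus c d `<=` annulus c d'.
Proof.
by move=> dd' p; rewrite /annulus /= !in_itv /= => /andP[? ?]; apply/andP; split; lra.
Qed.

Lemma bigcap_annulus c : \bigcap_k annulus c k.+1%:R^-1 `<=` unit_circle_at c.
Proof.
move=> p annulus_p; apply: contrapT => /eqP p_off.
have /ltr_add_invr[k] : 0 < `|sqdist c p - 1| by rewrite normr_gt0 subr_eq0.
rewrite add0r; apply/negP; rewrite -leNgt.
have := annulus_p k I; rewrite /annulus /= in_itv /=.
move: k.+1%:R^-1 => a /andP[? ?].
by rewrite ltW // ltr_norml; apply/andP; split; lra.
Qed.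

Lemma minkowski_sum_circleP (K : set (R * R)) z :
  minkowski_sum K circle z -> exists2 x, K x & unit_circle_at z x.
Proof.
case=> x [y [Kx [y_circle ->]]]; exists x => //.
by rewrite /unit_circle_at /sqdist /= -y_circle; ring.
Qed.

End circles.

Section measure.
Context {R : realType}.
Implicit Types (c : R * R) (Q : set (R * R)).

Lemma lebesgue2_unit_circle_at c : lebesgue2 (unit_circle_at c) = 0%E.
Proof.
rewrite /lebesgue2 /= /product_measure1; apply: integral0_eq => x _ /=.
set s := Num.sqrt (1 - (x - c.1) ^+ 2).
have section_sub : xsection (unit_circle_at c) x `<=` [set c.2 + s; c.2 - s].
  move=> y; rewrite /xsection /= inE /unit_circle_at /sqdist /= => on_circle.
  have : `|y - c.2| = s.
    by rewrite /s -sqrtr_sqr -on_circle; congr Num.sqrt; ring.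
  case: (ltrP (y - c.2) 0) => [y_lt|y_ge].
    by rewrite ltr0_norm // => <-; right; ring.
  by rewrite ger0_norm // => <-; left; ring.
apply: (subset_measure0 (mu := lebesgue_measure) _ _ section_sub).
- exact: measurable_xsection (measurable_R2_unit_circle_at c).
- by apply: measurableU; exact: measurable_set1.
- exact/countable_lebesgue_measure0/finite_set_countable/finite_set2.
Qed.

Lemma lebesgue2_annulusI_lt c Q (eps : R) :
  measurable_R2 Q -> (lebesgue2 Q < +oo)%E -> 0 < eps ->
  exists2 d, 0 < d & (lebesgue2 (annulus c d `&` Q) < eps%:E)%E.
Proof.
move=> mQ Q_fin eps_gt0; pose F k := annulus c k.+1%:R^-1 `&` Q.
have mF k : measurable_R2 (F k) by apply: measurableI => //; exact: measurable_R2_annulus.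
have F_noninc : nonincreasing_seq F.
  move=> n m nm; apply/subsetPset; apply: setSI; apply: annulusS.
  by rewrite lef_pV2 ?posrE ?ltr0n // ler_nat ltnS.
have bigcapF0 : lebesgue2 (\bigcap_k F k) = 0%E.
  apply: (subset_measure0 _ _ _ (lebesgue2_unit_circle_at c)).
  - exact: bigcapT_measurable.
  - exact: measurable_R2_unit_circle_at.
  - by move=> p Fp; apply: bigcap_annulus => k _; case: (Fp k I).
have F_cvg : (fun k => lebesgue2 (F k)) @ \oo --> 0%E.
  rewrite -bigcapF0; apply: nonincreasing_cvg_mu => //.
    by rewrite (le_lt_trans _ Q_fin) // le_measure ?inE //; [exact: mF | exact: subIsetr].
  by apply: bigcapT_measurable => k; exact: mF.
have [N _ F_lt] := F_cvg _ (@nbhs_open_ereal_lt _ 0 (fun=> eps) eps_gt0).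
by exists N.+1%:R^-1; [rewrite invr_gt0 ltr0n | exact: F_lt N (leqnn N)].
Qed.

End measure.

Section unit_square.
Context {R : realType}.

Definition unit_square : set (R * R) := `[0, 1]%classic `*` `[0, 1]%classic.

Lemma compact_unit_square : compact unit_square.
Proof. by apply: compact_setX; exact: segment_compact. Qed.

Lemma measurable_R2_unit_square : measurable_R2 unit_square.
Proof. by apply: measurableX; exact: measurable_itv. Qed.

Lemma lebesgue2_unit_square : lebesgue2 unit_square = 1%E.
Proof.
have itv01 : lebesgue_measure (`[0, 1]%classic : set R) = 1%E.
  by rewrite lebesgue_measure_itv /= lte01 EFinN sube0.
rewrite /lebesgue2 product_measure1E; try exact: measurable_itv.
by rewrite -[RHS]mule1; congr (_ * _)%E; exact: itv01.
Qed.

End unit_square.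

Section rational_points.
Context {R : realType}.

Definition rat_point (n : nat) : R * R :=
  if (unpickle n : option (rat * rat)) is Some q then (ratr q.1, ratr q.2) else (0, 0).

Lemma dense_rat_points : dense (range rat_point).
Proof.
move=> O [p Op]; rewrite openE => /(_ _ Op) /nbhs_ballP[e e_gt0 pe_O].
have rat_near (x : R) : exists q : rat, ball x e (ratr q).
  have [y [x_y [q _ qy]]] := dense_rat (ex_intro _ x (ballxx x e_gt0)) (ball_open x e).
  by exists q; rewrite qy.
have [q1 p1_q1] := rat_near p.1; have [q2 p2_q2] := rat_near p.2.
exists (ratr q1, ratr q2); split; first exact: pe_O.
by exists (pickle (q1, q2)) => //; rewrite /rat_point pickleK.
Qed.

End rational_points.

Lemma interior_eq0_dense_disjoint (T : topologicalType) (A D : set T) :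
  dense D -> A `&` D = set0 -> A° = set0.
Proof.
move=> D_dense AD0; rewrite -subset0 => x Ax.
have [y [Ay Dy]] := D_dense _ (ex_intro _ x Ax) (@open_interior _ A).
suff : (A `&` D) y by rewrite AD0.
by split => //; exact: interior_subset.
Qed.

Section holed_square.
Context {R : realType} (d : nat -> R).

Definition holed_square : set (R * R) :=
  unit_square `\` \bigcup_n annulus (rat_point n) (d n).

Lemma compact_holed_square : compact holed_square.
Proof.
rewrite /holed_square setDE; apply: compact_closedI; first exact: compact_unit_square.
by apply/open_closedC/bigcup_open => n _; exact: open_annulus.
Qed.

Lemma measurable_R2_holes : measurable_R2 (\bigcup_n annulus (rat_point n) (d n)).
Proof. by apply: bigcup_measurable => n _; exact: measurable_R2_annulus. Qed.

Lemma measurable_R2_holed_square : measurable_R2 holed_square.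
Proof. exact: measurableD measurable_R2_unit_square measurable_R2_holes. Qed.

Hypothesis d_gt0 : forall n, 0 < d n.

Lemma interior_minkowski_holed_square :
  interior (minkowski_sum holed_square circle) = set0.
Proof.
apply: (@interior_eq0_dense_disjoint _ _ _ dense_rat_points).
rewrite -subset0 => z [/minkowski_sum_circleP[x [_ x_hole] x_circle] [n _ nz]].
by apply: x_hole; exists n => //; rewrite nz; exact: unit_circle_at_sub_annulus x_circle.
Qed.

Hypothesis annulus_small : forall n,
  (lebesgue2 (annulus (rat_point n) (d n) `&` unit_square) < (2^-1 / (2 ^ n.+1)%:R)%:E)%E.

Lemma lebesgue2_holed_square_gt0 : (0 < lebesgue2 holed_square)%E.
Proof.
pose U := \bigcup_n annulus (rat_point n) (d n).
pose A n := annulus (rat_point n) (d n) `&` unit_square.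
have mA n : measurable_R2 (A n).
  exact: measurableI (measurable_R2_annulus _ _) measurable_R2_unit_square.
have square_split : lebesgue2 unit_square =
    (lebesgue2 holed_square + lebesgue2 (unit_square `&` U))%E.
  exact: measureDI measurable_R2_unit_square measurable_R2_holes.
have holes_small : (lebesgue2 (unit_square `&` U) <= (2^-1)%:E)%E.
  have cover : unit_square `&` U `<=` \bigcup_n A n by move=> p [Qp [n _ Up]]; exists n.
  have mQU : measurable_R2 (unit_square `&` U).
    exact: measurableI measurable_R2_unit_square measurable_R2_holes.
  apply: le_trans (@measure_sigma_subadditive _ _ _ _ _ _ mA mQU cover) _.
  apply: le_trans (epsilon_trick0 xpredT _) => //.
  by apply: lee_nneseries => [n _ _|n _]; [exact: measure_ge0 | exact/ltW/annulus_small].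
rewrite lt0e measure_ge0 andbT; apply/eqP => K0.
move: holes_small; rewrite -[X in (X <= _)%E]add0e -K0 -square_split lebesgue2_unit_square.
by rewrite lee_fin; lra.
Qed.

End holed_square.

Theorem mainTheorem10 (R : realType) :
  exists K : set (R * R),
    [/\ compact K, measurable_R2 K, (0 < lebesgue2 K)%E &
        interior (minkowski_sum K circle) = set0].
Proof.
have /choice[d d_spec] n : exists d : R, 0 < d /\
    (lebesgue2 (annulus (rat_point n) d `&` unit_square) < (2^-1 / (2 ^ n.+1)%:R)%:E)%E.
  have eps_gt0 : 0 < 2^-1 / (2 ^ n.+1)%:R :> R by rewrite divr_gt0 ?ltr0n ?expn_gt0.
  have square_fin : (lebesgue2 (@unit_square R) < +oo)%E by rewrite lebesgue2_unit_square ltry.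
  have [d' d'_gt0 d'_small] :=
    lebesgue2_annulusI_lt (rat_point n) _ _ measurable_R2_unit_square square_fin eps_gt0.
  by exists d'.
exists (holed_square d); split.
- exact: compact_holed_square.
- exact: measurable_R2_holed_square.
- by apply: lebesgue2_holed_square_gt0 => n; case: (d_spec n).
- by apply: interior_minkowski_holed_square => n; case: (d_spec n).
Qed.
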